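(* Let $X$ be a convex metric space over a Boolean ring $B$ which is a convex closure of a subset $H\subseteq X$ with $0\in H$, and let $f:X\to Y$ be a contractive map into a metric space $Y$ over $B$ with $f(0)=0'$. Then $f^{-1}(0')$ equals the set of all convex combinations (in $X$) of elements of $\{0\}\cup\{\overline{d'(0',f(x))}\,x : x\in H\}$, where for $a\in B$ and $x\in X$, $ax$ denotes the convex combination of $x,0$ with coefficients $a,\bar a$.
   Context: $B$ is a Boolean ring ($a\vee b=a+b+ab$, $a\le b\iff ab=a$, $\bar a=1+a$; $a_1\oplus\cdots\oplus a_n$ denotes a sum of pairwise disjoint elements). A Boolean metric space over $B$: set $X$ with $d:X\times X\to B$, $d(x,y)=0\iff x=y$, symmetric, $d(x,z)\le d(x,y)\vee d(y,z)$. For $x_1,\dots,x_n\in X$, $a_i\in B$ with $a_1\oplus\cdots\oplus a_n=1$, $x$ is a convex combination of the $x_i$ with coefficients $a_i$ if $a_id(x,x_i)=0$ for all $i$; $X$ is convex if all such combinations exist; $X$ is a convex closure of $H\subseteq X$ if $X$ is convex and every element of $X$ is a convex combination of elements of $H$. $d'$ is the metric of $Y$. A map is contractive if $d'(f(x),f(y))\le d(x,y)$. *)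

From HB Require Import structures.
From mathcomp Require Import all_boot all_order all_algebra.
Set Implicit Arguments. Unset Strict Implicit. Unset Printing Implicit Defensive.
Import GRing.Theory.
Local Open Scope ring_scope.

Definition boolean_ring (B : comPzRingType) : Prop := forall a : B, a * a = a.

Definition bjoin {B : comPzRingType} (a b : B) : B := a + b + a * b.
Definition ble {B : comPzRingType} (a b : B) : Prop := a * b = a.
Definition bcompl {B : comPzRingType} (a : B) : B := 1 + a.

Definition boolean_metric (B : comPzRingType) (X : Type) (d : X -> X -> B) : Prop :=
  [/\ (forall x y, d x y = 0 <-> x = y),
      (forall x y, d x y = d y x) &
      (forall x y z, ble (d x z) (bjoin (d x y) (d y z)))].

Definition disjoint_sum_one (B : comPzRingType) (n : nat) (a : 'I_n -> B) : Prop :=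
  (forall i j : 'I_n, i != j -> a i * a j = 0) /\ \sum_(i < n) a i = 1.

Definition convex_comb (B : comPzRingType) (X : Type) (d : X -> X -> B)
  (n : nat) (xs : 'I_n -> X) (a : 'I_n -> B) (x : X) : Prop :=
  forall i : 'I_n, a i * d x (xs i) = 0.

Definition convex_space (B : comPzRingType) (X : Type) (d : X -> X -> B) : Prop :=
  forall (n : nat) (xs : 'I_n -> X) (a : 'I_n -> B),
    disjoint_sum_one a -> exists x, convex_comb d xs a x.

Definition convex_comb_of (B : comPzRingType) (X : Type) (d : X -> X -> B)
  (S : X -> Prop) (x : X) : Prop :=
  exists (n : nat) (xs : 'I_n -> X) (a : 'I_n -> B),
    disjoint_sum_one a /\ (forall i, S (xs i)) /\ convex_comb d xs a x.

Definition convex_closure (B : comPzRingType) (X : Type) (d : X -> X -> B)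
  (H : X -> Prop) : Prop :=
  convex_space d /\ forall x, convex_comb_of d H x.

(* z = a x, i.e. z is the convex combination of x, 0 with coefficients a, ~a. *)
Definition scal_comb (B : comPzRingType) (X : Type) (d : X -> X -> B)
  (x0 : X) (a : B) (x z : X) : Prop :=
  convex_comb d (fun i : 'I_2 => if val i == 0%N then x else x0)
                (fun i : 'I_2 => if val i == 0%N then a else bcompl a) z.

Definition contractive (B : comPzRingType) (X Y : Type)
  (d : X -> X -> B) (d' : Y -> Y -> B) (f : X -> Y) : Prop :=
  forall x y, ble (d' (f x) (f y)) (d x y).

From HB Require Import structures.
From mathcomp Require Import all_boot all_order all_algebra.
From Stdlib Require ClassicalEpsilon.
Set Implicit Arguments. Unset Strict Implicit. Unset Printing Implicit Defensive.
Import GRing.Theory.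
Local Open Scope ring_scope.

(* - Boolean-ring algebra: the order a <= b (ab = a) is compatible with
     annihilation (e b = 0 and a <= b give e a = 0), complement is an
     involution, and a, ~a form a partition of 1.
   - In a Boolean metric space, a convex combination is unchanged when each
     point x_i is replaced by a point w_i with a_i d(x_i, w_i) = 0.
   - For a contractive f, any convex combination of points of the fibre
     lies in the fibre, and so do the scaled points (~d'(y0, f x)) x.
   - Conversely, if z = sum a_i x_i is in the fibre then a_i <= ~d'(y0, f x_i),
     so z is also the combination of the scaled points with the same a_i. *)

Section BooleanOrder.
Variable B : comPzRingType.
Implicit Types c e p q r : B.

Lemma ble_trans p q r : ble p q -> ble q r -> ble p r.
Proof. by rewrite /ble => pq qr; rewrite -pq -mulrA qr. Qed.

Lemma ble_join q r p : ble q p -> ble r p -> ble (bjoin q r) p.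
Proof. by rewrite /ble /bjoin => qp rp; rewrite !mulrDl -mulrA rp qp. Qed.

Lemma ble_bcompl c p : c * p = 0 -> ble p (bcompl c).
Proof. by move=> cp; rewrite /ble /bcompl mulrDr mulr1 mulrC cp addr0. Qed.

Lemma ble_mul_eq0 e p q : ble p q -> e * q = 0 -> e * p = 0.
Proof. by rewrite /ble => <- eq0; rewrite mulrCA eq0 mulr0. Qed.

Lemma mul_bjoin_eq0 e q r : e * q = 0 -> e * r = 0 -> e * bjoin q r = 0.
Proof. by rewrite /bjoin => eq0 er0; rewrite !mulrDr mulrA eq0 er0 mul0r !addr0. Qed.

End BooleanOrder.

Section BooleanRing.
Variable B : comPzRingType.
Hypothesis hB : boolean_ring B.
Implicit Types a c p : B.

Lemma addrr_eq0 a : a + a = 0.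
Proof.
have h := hB (a + a); rewrite mulrDl !mulrDr !hB in h.
by apply: (addrI (a + a)); rewrite addr0.
Qed.

Lemma bcomplK c : bcompl (bcompl c) = c.
Proof. by rewrite /bcompl addrA addrr_eq0 add0r. Qed.

Lemma ble_bcompl_eq0 p c : ble p c -> ble p (bcompl c) -> p = 0.
Proof. by rewrite /ble /bcompl mulrDr mulr1 => ->; rewrite addrr_eq0. Qed.

Lemma bcompl_partition c :
  disjoint_sum_one (fun i : 'I_2 => if val i == 0%N then c else bcompl c).
Proof.
split.
- move=> [[|[|i]] hi] [[|[|j]] hj] //= _;
    by rewrite /bcompl ?mulrDl ?mulrDr ?mul1r ?mulr1 ?hB ?addrr_eq0.
- by rewrite !big_ord_recr big_ord0 /= add0r /bcompl addrCA addrr_eq0 addr0.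
Qed.

End BooleanRing.

Section ConvexCombinations.
Variables (B : comPzRingType) (X : Type) (d : X -> X -> B).
Hypotheses (hB : boolean_ring B) (dmetric : boolean_metric d).

Lemma convex_comb_replace n (xs ws : 'I_n -> X) (a : 'I_n -> B) z :
  (forall i, a i * d (xs i) (ws i) = 0) ->
  convex_comb d xs a z -> convex_comb d ws a z.
Proof.
case: dmetric => _ _ dtri moved zxs i.
exact: ble_mul_eq0 (dtri z (xs i) (ws i)) (mul_bjoin_eq0 (zxs i) (moved i)).
Qed.

Lemma scal_comb_le x0 c x w :
  scal_comb d x0 c x w -> ble (d x w) (bcompl c) /\ ble (d w x0) c.
Proof.
case: dmetric => _ dsym _ cw; split.
- by apply: ble_bcompl; rewrite dsym; exact: (cw ord0).
- by rewrite -[c in ble _ c](bcomplK hB); apply: ble_bcompl; exact: (cw ord_max).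
Qed.

Lemma scal_comb_exists x0 c x :
  convex_space d -> exists w, scal_comb d x0 c x w.
Proof. by move=> conv; apply: conv; exact: bcompl_partition. Qed.

End ConvexCombinations.

Section Fibre.
Variables (B : comPzRingType) (X Y : Type).
Variables (d : X -> X -> B) (d' : Y -> Y -> B) (f : X -> Y) (x0 : X) (y0 : Y).
Hypotheses (hB : boolean_ring B) (dmetric : boolean_metric d).
Hypotheses (d'metric : boolean_metric d') (contr : contractive d d' f).
Hypothesis fx0 : f x0 = y0.

(* The fibre of a contractive map is closed under convex combinations:
   a_i d'(f z, y0) <= a_i (d(z, x_i) v d'(f x_i, y0)) = 0 for each i. *)
Lemma fibre_convex_comb n (xs : 'I_n -> X) (a : 'I_n -> B) z :
  disjoint_sum_one a -> (forall i, f (xs i) = y0) ->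
  convex_comb d xs a z -> f z = y0.
Proof.
case: d'metric => d0' _ dtri' [_ sum1] fxs zxs; apply/d0'.
rewrite -[d' _ _]mulr1 -sum1 mulr_sumr big1 // => i _; rewrite mulrC.
apply: ble_mul_eq0 (dtri' (f z) (f (xs i)) y0) (mul_bjoin_eq0 _ _).
- exact: ble_mul_eq0 (contr z (xs i)) (zxs i).
- by rewrite fxs (proj2 (d0' y0 y0) erefl) mulr0.
Qed.

(* The scaled point (~d'(y0, f x)) x lies in the fibre: with e = d'(y0, f x),
   d'(f w, y0) is below d(w, x0) <= ~e and below d(w, x) v e <= e. *)
Lemma fibre_scal_comb x w :
  scal_comb d x0 (bcompl (d' y0 (f x))) x w -> f w = y0.
Proof.
case: (d'metric) => d0' dsym' dtri' /(scal_comb_le hB dmetric) [xw wx0].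
case: dmetric => _ dsym _; apply/d0'.
apply: (ble_bcompl_eq0 hB (c := bcompl (d' y0 (f x)))).
- by apply: ble_trans wx0; rewrite -fx0; exact: contr.
- apply: ble_trans (dtri' (f w) (f x) y0) (ble_join _ _).
  + by apply: ble_trans (contr w x) _; rewrite dsym.
  + by rewrite bcomplK // dsym' /ble hB.
Qed.

Lemma fibre_coefficients n (xs : 'I_n -> X) (a : 'I_n -> B) z i :
  f z = y0 -> convex_comb d xs a z -> a i * d' y0 (f (xs i)) = 0.
Proof. by move=> <- zxs; exact: ble_mul_eq0 (contr z (xs i)) (zxs i). Qed.

End Fibre.

Theorem mainTheorem20 (B : comPzRingType) (X Y : Type)
  (d : X -> X -> B) (d' : Y -> Y -> B) (x0 : X) (y0 : Y)
  (H : X -> Prop) (f : X -> Y) :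
  boolean_ring B ->
  boolean_metric d -> boolean_metric d' ->
  convex_closure d H -> H x0 ->
  contractive d d' f -> f x0 = y0 ->
  forall z : X,
    f z = y0 <->
    convex_comb_of d
      (fun w => w = x0 \/
         exists x, H x /\ scal_comb d x0 (bcompl (d' y0 (f x))) x w) z.
Proof.
move=> hB dmetric d'metric [conv hull] _ contr fx0 z; split.
- (* Write z = sum a_i x_i with x_i in H and replace x_i by w_i = c_i x_i. *)
  move=> fz; have [n [xs [a [a1 [xsH zxs]]]]] := hull z.
  have [ws wsc] := ClassicalEpsilon.choice
    (fun i w => scal_comb d x0 (bcompl (d' y0 (f (xs i)))) (xs i) w)
    (fun i => scal_comb_exists hB x0 _ (xs i) conv).
  exists n, ws, a; split=> //; split=> [i|].
  + by right; exists (xs i).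
  + apply: (convex_comb_replace dmetric _ zxs) => i.
    apply: ble_mul_eq0 (fibre_coefficients contr i fz zxs).
    by have [+ _] := scal_comb_le hB dmetric (wsc i); rewrite bcomplK.
- (* Every generator lies in the fibre, which is convex. *)
  move=> [n [xs [a [a1 [xsS zxs]]]]].
  apply: (fibre_convex_comb d'metric contr a1 _ zxs) => i.
  case: (xsS i) => [-> // | [x [_ wsc]]].
  exact: (fibre_scal_comb hB dmetric d'metric contr fx0 wsc).
Qed.
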